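(* Fix $\alpha\in\mathbb{R}^*\setminus\{\pm1\}$ and let $L=\mathbb{Z}\ltimes\mathbb{R}$ be the Lie group (with $\mathbb{Z}$ discrete) in which $(z,0)(0,r)(-z,0)=(0,\alpha^z r)$ for $z\in\mathbb{Z}$, $r\in\mathbb{R}$. Then $L$ has the topological $R_\infty$-property.
   Context: For an automorphism $\varphi$ of a group $G$, the $\varphi$-twisted conjugacy classes are the equivalence classes of the relation $x\sim_\varphi y$ iff $y=gx\varphi(g)^{-1}$ for some $g\in G$; $R(\varphi)\in\mathbb{N}\cup\{\infty\}$ is the number of these classes. A topological group $G$ has the topological $R_\infty$-property if $R(\varphi)=\infty$ for every automorphism $\varphi$ of $G$ that is a homeomorphism (for a Lie group: every continuous automorphism). *)

From Stdlib Require Import Reals ZArith List.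
Open Scope R_scope.

(* The group L = Z ⋉_alpha R, elements (z, r) : Z * R, with
   (z1, r1) * (z2, r2) = (z1 + z2, r1 + alpha^z1 * r2),
   so that (z,0)(0,r)(-z,0) = (0, alpha^z r). *)
Definition Lmul (alpha : R) (x y : Z * R) : Z * R :=
  ((fst x + fst y)%Z, snd x + powerRZ alpha (fst x) * snd y).

Definition Linv (alpha : R) (x : Z * R) : Z * R :=
  ((- fst x)%Z, - (powerRZ alpha (- fst x) * snd x)).

Definition is_hom (alpha : R) (f : Z * R -> Z * R) : Prop :=
  forall x y, f (Lmul alpha x y) = Lmul alpha (f x) (f y).

(* Continuity for the topology of Z (discrete) times R (usual):
   at every point (z, r), for every eps > 0 there is delta > 0 such that
   |s - r| < delta implies f(z,s) has the same Z-component as f(z,r) and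
   R-component within eps. *)
Definition L_continuous (f : Z * R -> Z * R) : Prop :=
  forall (z : Z) (r eps : R), 0 < eps -> exists delta, 0 < delta /\
    forall s, Rabs (s - r) < delta ->
      fst (f (z, s)) = fst (f (z, r)) /\
      Rabs (snd (f (z, s)) - snd (f (z, r))) < eps.

Definition topological_automorphism (alpha : R) (phi : Z * R -> Z * R) : Prop :=
  is_hom alpha phi /\ L_continuous phi /\
  exists psi : Z * R -> Z * R,
    (forall x, psi (phi x) = x) /\ (forall x, phi (psi x) = x) /\
    L_continuous psi.

Definition twisted_conj (alpha : R) (phi : Z * R -> Z * R) (x y : Z * R) : Prop :=
  exists g, y = Lmul alpha (Lmul alpha g x) (Linv alpha (phi g)).

(* R(phi) = infinity: there is no finite list of elements meeting every
   phi-twisted conjugacy class. *)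
Definition Reidemeister_infinite (alpha : R) (phi : Z * R -> Z * R) : Prop :=
  ~ exists l : list (Z * R),
      forall x, exists y, In y l /\ twisted_conj alpha phi y x.

Definition topological_R_infinity (alpha : R) : Prop :=
  forall phi, topological_automorphism alpha phi -> Reidemeister_infinite alpha phi.

(* An automorphism [phi] of [L = Z ⋉_alpha R] preserves the subgroup [0 × R], since for
   [alpha <> 1] it consists of commutators; hence it induces an automorphism [z ↦ k z] of
   the quotient [Z], with [k = ±1].  If [k = 1], the [Z]-component is an invariant of
   twisted conjugacy taking every integer value, so there are infinitely many classes.
   If [k = -1], the restriction [f] of [phi] to [0 × R] satisfies
   [f (alpha r) = alpha^-1 f r]; iterating this with whichever of [alpha], [alpha^-1]
   has modulus < 1 and using continuity at [0] forces [f = 0], contradicting injectivity. *)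

From Stdlib Require Import Reals ZArith List Lia Lra.
Open Scope R_scope.

Lemma list_Z_upper_bound (s : list Z) :
  exists n, forall m, In m s -> (m < n)%Z.
Proof.
  induction s as [|a s [n Hn]].
  - exists 0%Z; intros m [].
  - exists (Z.max (a + 1) n); intros m [<- | Hm].
    + lia.
    + specialize (Hn m Hm); lia.
Qed.

Lemma eq0_of_scaling_locally_bounded (f : R -> R) (beta : R) :
  Rabs beta < 1 ->
  (forall r, f r = beta * f (beta * r)) ->
  (exists delta, 0 < delta /\ forall s, Rabs s < delta -> Rabs (f s) < 1) ->
  forall r, f r = 0.
Proof.
  intros Hbeta Hf [delta [Hdelta Hbound]] r.
  assert (Hiter : forall n, f r = beta ^ n * f (beta ^ n * r)).
  { induction n as [|n IH]; simpl.
    - rewrite !Rmult_1_l; reflexivity.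
    - rewrite IH, (Hf (beta ^ n * r)).
      replace (beta * (beta ^ n * r)) with (beta * beta ^ n * r) by ring; ring. }
  destruct (Req_dec (f r) 0) as [| Hne]; [assumption | exfalso].
  assert (Hfr : 0 < Rabs (f r)) by (apply Rabs_pos_lt; assumption).
  assert (Hr : 0 < Rabs r + 1) by (pose proof (Rabs_pos r); lra).
  set (eps := Rmin (delta / (Rabs r + 1)) (Rabs (f r))).
  assert (Heps : 0 < eps).
  { apply Rmin_glb_lt; [apply Rdiv_lt_0_compat |]; assumption. }
  destruct (pow_lt_1_zero beta Hbeta eps Heps) as [N HN].
  specialize (HN N (le_n N)).
  pose proof (Rmin_l (delta / (Rabs r + 1)) (Rabs (f r))).
  pose proof (Rmin_r (delta / (Rabs r + 1)) (Rabs (f r))).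
  pose proof (Rabs_pos (beta ^ N)).
  assert (Hsmall : Rabs (beta ^ N * r) < delta).
  { rewrite Rabs_mult.
    assert (Rabs (beta ^ N) * (Rabs r + 1) < delta).
    { apply Rlt_le_trans with (delta / (Rabs r + 1) * (Rabs r + 1)).
      - apply Rmult_lt_compat_r; unfold eps in HN; lra.
      - right; field; lra. }
    nra. }
  specialize (Hbound _ Hsmall).
  pose proof (f_equal Rabs (Hiter N)) as E; rewrite Rabs_mult in E.
  pose proof (Rabs_pos (f (beta ^ N * r))).
  unfold eps in HN; nra.
Qed.

Section Automorphism.

Variables (alpha : R) (phi : Z * R -> Z * R).
Hypothesis hom : is_hom alpha phi.

Let k := fst (phi (1%Z, 0)).

Lemma hom_fst_translation : alpha <> 1 -> forall r, fst (phi (0%Z, r)) = 0%Z.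
Proof.
  intros h1 r.
  set (t := r / (alpha - 1)).
  (* [(0, r)] is the commutator of [(1, 0)] and [(0, t)]. *)
  assert (E : Lmul alpha (1%Z, 0) (0%Z, t) =
              Lmul alpha (Lmul alpha (0%Z, r) (0%Z, t)) (1%Z, 0)).
  { unfold Lmul; simpl; f_equal; unfold t; field; intro; apply h1; lra. }
  pose proof (f_equal (fun x => fst (phi x)) E) as Efst; simpl in Efst.
  rewrite !hom in Efst; unfold Lmul in Efst; simpl in Efst; lia.
Qed.

Lemma hom_fst_Z : forall z, fst (phi (z, 0)) = (z * k)%Z.
Proof.
  assert (Hadd : forall z1 z2,
    fst (phi ((z1 + z2)%Z, 0)) = (fst (phi (z1, 0%R)) + fst (phi (z2, 0%R)))%Z).
  { intros z1 z2.
    replace ((z1 + z2)%Z, 0) with (Lmul alpha (z1, 0) (z2, 0))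
      by (unfold Lmul; simpl; f_equal; ring).
    rewrite hom; reflexivity. }
  assert (H0 : fst (phi (0%Z, 0%R)) = 0%Z) by (specialize (Hadd 0%Z 0%Z); simpl in Hadd; lia).
  apply Z.peano_ind.
  - rewrite H0; lia.
  - intros z IH; rewrite <- Z.add_1_r, Hadd, IH; unfold k; lia.
  - intros z IH; pose proof (Hadd (Z.pred z) 1%Z) as E.
    replace (Z.pred z + 1)%Z with z in E by lia; unfold k in *; lia.
Qed.

Lemma hom_fst : alpha <> 1 -> forall z r, fst (phi (z, r)) = (z * k)%Z.
Proof.
  intros h1 z r.
  replace (z, r) with (Lmul alpha (0%Z, r) (z, 0))
    by (unfold Lmul; simpl; f_equal; ring).
  rewrite hom; unfold Lmul; simpl.
  rewrite hom_fst_translation, hom_fst_Z by assumption; lia.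
Qed.

Lemma hom_fst_unit (psi : Z * R -> Z * R) :
  alpha <> 1 -> (forall x, phi (psi x) = x) -> k = 1%Z \/ k = (-1)%Z.
Proof.
  intros h1 Hpsi.
  pose proof (f_equal fst (Hpsi (1%Z, 0))) as E; simpl in E.
  destruct (psi (1%Z, 0)) as [m s]; rewrite hom_fst in E by assumption.
  apply (Z.mul_eq_1 k m); lia.
Qed.

Lemma twisted_conj_fst : alpha <> 1 -> k = 1%Z ->
  forall x y, twisted_conj alpha phi y x -> fst x = fst y.
Proof.
  intros h1 Hk x [yz yr] [[gz gr] ->]; unfold Lmul, Linv; simpl.
  rewrite hom_fst, Hk by assumption; lia.
Qed.

Lemma Reidemeister_infinite_of_fst_invariant :
  (forall x y, twisted_conj alpha phi y x -> fst x = fst y) ->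
  Reidemeister_infinite alpha phi.
Proof.
  intros Hinv [l Hl].
  destruct (list_Z_upper_bound (map fst l)) as [n Hn].
  destruct (Hl (n, 0)) as [y [Hy Hconj]].
  specialize (Hn (fst y) (in_map fst l y Hy)).
  rewrite <- (Hinv _ _ Hconj) in Hn; simpl in Hn; lia.
Qed.

Lemma hom_translation_scaling : alpha <> 1 -> k = (-1)%Z ->
  forall r, phi (0%Z, alpha * r) = (0%Z, / alpha * snd (phi (0%Z, r))).
Proof.
  intros h1 Hk r.
  (* Conjugation by [(1, 0)] scales [0 × R] by [alpha], conjugation by [phi (1, 0)] by [/ alpha]. *)
  assert (E : Lmul alpha (1%Z, 0) (0%Z, r) = Lmul alpha (0%Z, alpha * r) (1%Z, 0))
    by (unfold Lmul; simpl; f_equal; ring).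
  pose proof (f_equal phi E) as Ephi; rewrite !hom in Ephi.
  pose proof (hom_fst_translation h1 r) as Fr.
  pose proof (hom_fst_translation h1 (alpha * r)) as Far.
  unfold k in Hk.
  destruct (phi (1%Z, 0)) as [a c], (phi (0%Z, r)) as [b s],
    (phi (0%Z, alpha * r)) as [b' s'].
  simpl in *; subst a b b'.
  unfold Lmul in Ephi; simpl in Ephi; rewrite Rmult_1_r in Ephi.
  injection Ephi; intros Es.
  f_equal; lra.
Qed.

Lemma hom_translation_trivial : alpha <> 0 -> alpha <> 1 -> alpha <> -1 ->
  L_continuous phi -> k = (-1)%Z -> forall r, phi (0%Z, r) = (0%Z, 0).
Proof.
  intros h0 h1 hm1 Hcont Hk.
  set (f := fun r => snd (phi (0%Z, r))).
  assert (Hphi : forall r, phi (0%Z, r) = (0%Z, f r)).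
  { intro r; unfold f; pose proof (hom_fst_translation h1 r) as E.
    destruct (phi (0%Z, r)); simpl in *; subst; reflexivity. }
  assert (Hscale : forall r, f (alpha * r) = / alpha * f r).
  { intro r; unfold f at 1; rewrite hom_translation_scaling by assumption; reflexivity. }
  assert (Hf0 : f 0 = 0).
  { pose proof (Hscale 0) as E; rewrite Rmult_0_r in E.
    assert (E' : (alpha - 1) * f 0 = 0).
    { replace ((alpha - 1) * f 0) with (alpha * (f 0 - / alpha * f 0)) by (field; assumption).
      rewrite <- E; ring. }
    destruct (Rmult_integral _ _ E'); [lra | assumption]. }
  assert (Hbound : exists delta, 0 < delta /\ forall s, Rabs s < delta -> Rabs (f s) < 1).
  { destruct (Hcont 0%Z 0 1 Rlt_0_1) as [delta [Hdelta Hnear]].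
    exists delta; split; [assumption |]; intros s Hs.
    destruct (Hnear s) as [_ Hfs]; [rewrite Rminus_0_r; exact Hs |].
    change (Rabs (f s - f 0) < 1) in Hfs; rewrite Hf0, Rminus_0_r in Hfs; exact Hfs. }
  assert (Habs : Rabs alpha <> 1).
  { unfold Rabs; destruct (Rcase_abs alpha); lra. }
  intro r; rewrite Hphi; f_equal; revert r.
  destruct (Rlt_or_le (Rabs alpha) 1) as [Hlt | Hge].
  - apply (eq0_of_scaling_locally_bounded f alpha Hlt); [| assumption].
    intro r; rewrite Hscale; field; assumption.
  - apply (eq0_of_scaling_locally_bounded f (/ alpha)); [| | assumption].
    + rewrite Rabs_inv, <- Rinv_1; apply Rinv_0_lt_contravar; lra.
    + intro r; rewrite <- Hscale.
      replace (alpha * (/ alpha * r)) with r by (field; assumption); reflexivity.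
Qed.

End Automorphism.

Theorem mainTheorem7 (alpha : R) (h0 : alpha <> 0) (h1 : alpha <> 1)
  (hm1 : alpha <> -1) : topological_R_infinity alpha.
Proof.
  intros phi [hom [Hcont [psi [Hpsi_phi [Hphi_psi _]]]]].
  destruct (hom_fst_unit alpha phi hom psi h1 Hphi_psi) as [Hk | Hk].
  - apply Reidemeister_infinite_of_fst_invariant.
    exact (twisted_conj_fst alpha phi hom h1 Hk).
  - exfalso.
    pose proof (hom_translation_trivial alpha phi hom h0 h1 hm1 Hcont Hk) as Htriv.
    pose proof (f_equal psi (eq_trans (Htriv 1) (eq_sym (Htriv 0)))) as E.
    rewrite !Hpsi_phi in E; injection E; lra.
Qed.
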